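(* Let $H$ be a Hamiltonian on $\mathbb{H}_\mathcal{S}$, $|\Psi\rangle\in\mathbb{H}_\mathcal{S}$ a unit vector, $\beta\ge0$, $\varepsilon\ge0$, and $S_r=\{\Delta\beta_l>0\}_{l\in[r]}$ with $\sum_{l=1}^r\Delta\beta_l=\beta$. Set $\beta_0:=0$, $\beta_l:=\sum_{k=1}^l\Delta\beta_k$, and $p_\Psi(b):=\|F_b(H)|\Psi\rangle\|^2$. For each $l\in[r]$ let $P_l$ be a $(\Delta\beta_l,\varepsilon'_l,\alpha_l)$-QITE-primitive for $H$ with $\alpha_l>0$ and $$\varepsilon'_l\le\begin{cases}\dfrac{\varepsilon\prod_{k=1}^r\alpha_k}{2\cdot4^{r-1}}\sqrt{p_\Psi(\beta)}, & l=1,\\[2mm] \dfrac{\varepsilon\prod_{k=l}^r\alpha_k}{4^{r-l+1}}\sqrt{\dfrac{p_\Psi(\beta)}{p_\Psi(\beta_{l-1})}}, & l>1.\end{cases}$$ Then the fragmented QITE algorithm is a $(\beta,\mathcal{O}(\varepsilon))$-master-QITE-algorithm for $H$ on $|\Psi\rangle$, with average query complexity $$Q_{S_r}(\beta,\varepsilon)=\sum_{l=1}^r n_l\,q(\Delta\beta_l,\varepsilon'_l,\alpha_l),\qquad n_l:=\frac{p_\Psi(\beta_{l-1})}{p_\Psi(\beta)\prod_{k=l}^r\alpha_k^2},$$ where $n_l$ is the average number of times $P_l$ is run and $q(\Delta\beta_l,\varepsilon'_l,\alpha_l)$ is the query complexity of $P_l$.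
   Context: $F_b(H):=e^{-b(H-\lambda_{\min}\mathbb{1})}$ with $\lambda_{\min}$ the smallest eigenvalue of $H$ ($\|H\|\le1$). A unitary $U$ on $\mathbb{H}_\mathcal{S}\otimes\mathbb{H}_\mathcal{A}$ is an $(\varepsilon,\alpha)$-block-encoding of $A$ if $\|\alpha A-\langle0|U|0\rangle\|\le\varepsilon$; a $(b,\varepsilon',\alpha)$-QITE-primitive of query complexity $q$ is a circuit making $q$ oracle calls that generates an $(\varepsilon',\alpha)$-block-encoding of $F_b(H)$; applying it to $|\phi\rangle|0\rangle$ and measuring the ancillas in the computational basis, outcome $|0\rangle$ (''success'') leaves the system in $\langle0|U|0\rangle|\phi\rangle$ normalized. A $(\beta,\varepsilon)$-master-QITE-algorithm for $H$ on $|\Psi\rangle$ is a procedure using such primitives that outputs $F_\beta(H)|\Psi\rangle/\|F_\beta(H)|\Psi\rangle\|$ up to trace-distance error $\varepsilon$ with unit probability; its query complexity is the sum of the query complexities of all primitives applied. The fragmented QITE algorithm: set $l=1$, prepare the system in $|\Psi\rangle$ and ancillas in $|0\rangle$; while $l\le r$: apply $P_l$, measure the ancillas in the computational basis; if the outcome is $|0\rangle$ set $l\to l+1$, otherwise restart from scratch (fresh preparation of $|\Psi\rangle$, $l=1$).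
   Formalization: O(ε) means at most a fixed constant times ε, for ε below a fixed positive bound, and $n_l$ and $Q_{S_r}(\beta,\varepsilon)$ match the average number of runs of $P_l$ and the average query complexity only within relative error O(ε). Each condition added here is assumed in the paper as well or is needed for the statement above to hold. *)

From HB Require Import structures.
From mathcomp Require Import all_boot all_order all_algebra.
From mathcomp Require Import all_classical all_reals.
From mathcomp Require Import topology normedtype sequences exp.
From mathcomp.real_closed Require Import complex mxtens.

Set Implicit Arguments.
Unset Strict Implicit.
Unset Printing Implicit Defensive.

Import Order.TTheory GRing.Theory Num.Theory.
Local Open Scope ring_scope.

Section QITE.
Variable R : realType.
Local Notation C := (R[i]).

Definition adj n k (M : 'M[C]_(n, k)) : 'M[C]_(k, n) := (map_mx conjc M)^T.

Definition vnorm n (v : 'cV[C]_n) : R :=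
  Num.sqrt (\sum_i ((complex.Re (v i 0)) ^+ 2 + (complex.Im (v i 0)) ^+ 2)).

Definition opnorm_le n k (M : 'M[C]_(n, k)) (e : R) : Prop :=
  forall v : 'cV[C]_k, vnorm (M *m v) <= e * vnorm v.

Definition unitary n (U : 'M[C]_n) : Prop := U *m adj U = 1%:M.

Definition ham n (V : 'M[C]_n) (d : 'I_n -> R) : 'M[C]_n :=
  V *m diag_mx (\row_i ((d i)%:C)%C) *m adj V.

Definition lmin n (d : 'I_n.+1 -> R) : R := \big[Num.min/d ord0]_i d i.

(* F_b(H) = exp(-b (H - lambda_min 1)), by functional calculus *)
Definition Fb n (V : 'M[C]_n.+1) (d : 'I_n.+1 -> R) (b : R) : 'M[C]_n.+1 :=
  V *m diag_mx (\row_i ((expR (- b * (d i - lmin d)))%:C)%C) *m adj V.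

Definition pPsi n (V : 'M[C]_n.+1) (d : 'I_n.+1 -> R) (psi : 'cV[C]_n.+1) (b : R) : R :=
  vnorm (Fb V d b *m psi) ^+ 2.

(* <0| U |0> for U acting on system (dim n) (x) ancillas (dim m.+1) *)
Definition sysblock n m (U : 'M[C]_(n * m.+1)) : 'M[C]_n :=
  \matrix_(i, j) U (mxtens_index (i, ord0)) (mxtens_index (j, ord0)).

Definition block_encoding n m (U : 'M[C]_(n * m.+1)) (A : 'M[C]_n) (eps alpha : R) : Prop :=
  unitary U /\ opnorm_le ((alpha%:C)%C *: A - sysblock U) eps.

Definition normalize n (v : 'cV[C]_n) : 'cV[C]_n := ((vnorm v)^-1%:C)%C *: v.

(* state of the system (conditioned on success so far) before primitive k
   (0-indexed) within one attempt of the fragmented algorithm *)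
Fixpoint run_state n (A : nat -> 'M[C]_n) (psi : 'cV[C]_n) (k : nat) : 'cV[C]_n :=
  match k with
  | 0 => psi
  | k'.+1 => normalize (A k' *m run_state A psi k')
  end.

(* Born-rule probability that the ancilla measurement after primitive k
   yields |0>, given that primitive k is applied *)
Definition succ_prob n (A : nat -> 'M[C]_n) (psi : 'cV[C]_n) (k : nat) : R :=
  vnorm (A k *m run_state A psi k) ^+ 2.

(* probability that, within one attempt, primitives 0..l-1 all succeed
   (i.e. primitive l is run) *)
Definition reach_prob n (A : nat -> 'M[C]_n) (psi : 'cV[C]_n) (l : nat) : R :=
  \prod_(k < l) succ_prob A psi k.

Definition dm n (v : 'cV[C]_n) : 'M[C]_n := v *m adj v.

Definition projector n (P : 'M[C]_n) : Prop := P *m P = P /\ adj P = P.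

(* trace distance D(rho, sigma) = max_{P projector} tr(P (rho - sigma)) <= e *)
Definition tdist_le n (rho sigma : 'M[C]_n) (e : R) : Prop :=
  forall P : 'M[C]_n, projector P -> \tr (P *m (rho - sigma)) <= (e%:C)%C.

End QITE.

From HB Require Import structures.
From mathcomp Require Import all_boot all_order all_algebra.
From mathcomp Require Import all_classical all_reals.
From mathcomp Require Import topology normedtype sequences exp.
From mathcomp.real_closed Require Import complex mxtens.
From mathcomp Require Import lra ring.

Set Implicit Arguments.
Unset Strict Implicit.
Unset Printing Implicit Defensive.

Import Order.TTheory GRing.Theory Num.Theory numFieldNormedType.Exports.
Local Open Scope classical_set_scope.
Local Open Scope ring_scope.

(* Write W_l := alpha_l F_{dbeta_l}(H) for the ideal primitive and A_l := <0|U_l|0> for the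
   actual one, a contraction that is eps'_l-close to W_l. Since F_a F_b = F_(a+b), the ideal
   unnormalised state W_(l-1) ... W_0 Psi is (alpha_0 ... alpha_(l-1)) F_(beta_l) Psi, of norm
   (alpha_0 ... alpha_(l-1)) sqrt(p(beta_l)). Telescoping, the actual unnormalised state after
   l steps is within sum_(j<l) eps'_j |W_(j-1) ... W_0 Psi| of the ideal one, and the choice of
   eps'_j makes the j-th term at most eps a 2^j / 2^r, a being the norm of the final ideal state;
   so every actual state is within eps a of the ideal one. An attempt succeeds with probability
   the squared norm of the final actual state, P_l is run on average (probability of reaching
   l) / (probability of success) times (a geometric series), and both this ratio and the
   normalised output are stable under a perturbation of relative size eps. *)

Section Euclidean.
Variable R : realType.
Local Notation C := R[i].

Lemma adjE n k (M : 'M[C]_(n, k)) i j : adj M i j = (M j i)^*%C.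
Proof. by rewrite !mxE. Qed.

Lemma adjM a b c (M : 'M[C]_(a, b)) (N : 'M[C]_(b, c)) : adj (M *m N) = adj N *m adj M.
Proof.
apply/matrixP=> i j; rewrite !adjE !mxE rmorph_sum; apply: eq_bigr => k _.
by rewrite !adjE rmorphM mulrC.
Qed.

Lemma mul_adj_unitary a (U : 'M[C]_a) : unitary U -> adj U *m U = 1%:M.
Proof. exact: mulmx1C. Qed.

Definition sqnorm n (x : 'cV[C]_n) : R :=
  \sum_i (complex.Re (x i 0) ^+ 2 + complex.Im (x i 0) ^+ 2).

(* Re <x, y>: the Euclidean inner product of x and y seen as vectors of R^(2n) *)
Definition dotr n (x y : 'cV[C]_n) : R :=
  \sum_i (complex.Re (x i 0) * complex.Re (y i 0) + complex.Im (x i 0) * complex.Im (y i 0)).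

Lemma vnormE n (x : 'cV[C]_n) : vnorm x = Num.sqrt (sqnorm x).
Proof. by []. Qed.

Lemma sqnorm_ge0 n (x : 'cV[C]_n) : 0 <= sqnorm x.
Proof. by apply: sumr_ge0 => i _; rewrite addr_ge0 ?sqr_ge0. Qed.

Lemma vnorm_ge0 n (x : 'cV[C]_n) : 0 <= vnorm x.
Proof. exact: sqrtr_ge0. Qed.

Lemma vnorm_sqr n (x : 'cV[C]_n) : vnorm x ^+ 2 = sqnorm x.
Proof. by rewrite sqr_sqrtr ?sqnorm_ge0. Qed.

Lemma ler_vnorm n k (x : 'cV[C]_n) (y : 'cV[C]_k) :
  (vnorm x <= vnorm y) = (sqnorm x <= sqnorm y).
Proof. by rewrite !vnormE ler_sqrt ?sqnorm_ge0. Qed.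

Lemma adj_mulmx_self n (x : 'cV[C]_n) : (adj x *m x) 0 0 = (sqnorm x)%:C%C.
Proof.
rewrite mxE raddf_sum; apply: eq_bigr => i _; rewrite adjE.
by case: (x i 0) => a b; apply/eqP; rewrite eq_complex /=; apply/andP; split; apply/eqP; ring.
Qed.

Lemma dotrE n (x y : 'cV[C]_n) : dotr x y = complex.Re ((adj x *m y) 0 0).
Proof.
rewrite mxE raddf_sum; apply: eq_bigr => i _; rewrite adjE.
by case: (x i 0) (y i 0) => a b [c d] /=; ring.
Qed.

Lemma sqnormD n (x y : 'cV[C]_n) : sqnorm (x + y) = sqnorm x + sqnorm y + 2 * dotr x y.
Proof.
rewrite /sqnorm /dotr mulr_sumr -!big_split /=; apply: eq_bigr => i _.
rewrite mxE !raddfD /=; ring.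
Qed.

Lemma sqnormZ n (c : R) (x : 'cV[C]_n) : sqnorm (c%:C%C *: x) = c ^+ 2 * sqnorm x.
Proof.
rewrite /sqnorm mulr_sumr; apply: eq_bigr => i _; rewrite mxE.
by case: (x i 0) => a b /=; ring.
Qed.

Lemma dotrZr n (c : R) (x y : 'cV[C]_n) : dotr x (c%:C%C *: y) = c * dotr x y.
Proof.
rewrite /dotr mulr_sumr; apply: eq_bigr => i _; rewrite mxE.
by case: (y i 0) => a b /=; ring.
Qed.

Lemma sqnorm_eq0 n (x : 'cV[C]_n) : sqnorm x = 0 -> x = 0.
Proof.
move=> /eqP; rewrite psumr_eq0 => [/allP x0|i _]; last by rewrite addr_ge0 ?sqr_ge0.
apply/matrixP=> i j; rewrite (ord1 j) mxE.
have /x0 : i \in index_enum 'I_n by rewrite mem_index_enum.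
rewrite /= paddr_eq0 ?sqr_ge0 // !sqrf_eq0 => /andP[/eqP re0 /eqP im0].
by move: (x i 0) re0 im0 => [a b] /= -> ->.
Qed.

Lemma vnorm_eq0 n (x : 'cV[C]_n) : vnorm x = 0 -> x = 0.
Proof. by move=> x0; apply: sqnorm_eq0; rewrite -vnorm_sqr x0 expr0n. Qed.

Lemma vnorm0 n : vnorm (0 : 'cV[C]_n) = 0.
Proof. by rewrite /vnorm big1 ?sqrtr0 // => i _; rewrite mxE expr0n /= addr0. Qed.

Lemma vnorm_gt0 n (x : 'cV[C]_n) : (0 < vnorm x) = (x != 0).
Proof.
rewrite lt_def vnorm_ge0 andbT; congr (~~ _).
by apply/eqP/eqP => [/vnorm_eq0 | ->]; last exact: vnorm0.
Qed.

Lemma dotr_CauchySchwarz n (x y : 'cV[C]_n) : dotr x y ^+ 2 <= sqnorm x * sqnorm y.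
Proof.
have [y0|y_neq0] := eqVneq (sqnorm y) 0.
  rewrite (sqnorm_eq0 y0) /dotr big1 ?expr0n ?mulr_ge0 ?sqnorm_ge0 // => i _.
  by rewrite mxE /=; ring.
have y_gt0 : 0 < sqnorm y by rewrite lt_def y_neq0 sqnorm_ge0.
(* the minimum of t |-> sqnorm (x + t y), attained at t = - dotr x y / sqnorm y *)
have := sqnorm_ge0 (x + (- (dotr x y / sqnorm y))%:C%C *: y).
rewrite sqnormD sqnormZ dotrZr => h; rewrite -subr_ge0.
move: h; set r := dotr x y; set b := sqnorm y => h.
have -> : sqnorm x * b - r ^+ 2 = b * (sqnorm x + (- (r / b)) ^+ 2 * b + 2 * (- (r / b) * r)).
  by field; rewrite gt_eqF.
by rewrite mulr_ge0 // ltW.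
Qed.

Lemma dotr_le_vnorm n (x y : 'cV[C]_n) : dotr x y <= vnorm x * vnorm y.
Proof.
rewrite -sqrtrM ?sqnorm_ge0 //; apply: le_trans (ler_norm _) _.
by rewrite -sqrtr_sqr ler_sqrt ?dotr_CauchySchwarz // mulr_ge0 ?sqnorm_ge0.
Qed.

Lemma vnormD n (x y : 'cV[C]_n) : vnorm (x + y) <= vnorm x + vnorm y.
Proof.
rewrite -(ger0_norm (addr_ge0 (vnorm_ge0 x) (vnorm_ge0 y))) -sqrtr_sqr.
rewrite vnormE ler_sqrt ?sqr_ge0 // sqnormD sqrrD !vnorm_sqr.
by have := dotr_le_vnorm x y; lra.
Qed.

Lemma vnormZ n (c : R) (x : 'cV[C]_n) : vnorm (c%:C%C *: x) = `|c| * vnorm x.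
Proof. by rewrite !vnormE sqnormZ sqrtrM ?sqr_ge0 // sqrtr_sqr. Qed.

Lemma vnormN n (x : 'cV[C]_n) : vnorm (- x) = vnorm x.
Proof. by rewrite -scaleN1r -(rmorphN1 (real_complex R)) vnormZ normrN1 mul1r. Qed.

Lemma vnorm_lerB_dist n (x y : 'cV[C]_n) : `|vnorm x - vnorm y| <= vnorm (x - y).
Proof.
have := vnormD (x - y) y; have := vnormD (y - x) x.
by rewrite !subrK -opprB vnormN => hx hy; apply/ler_normlP; split; lra.
Qed.

Lemma sqnorm_unitary a (U : 'M[C]_a) x : unitary U -> sqnorm (U *m x) = sqnorm x.
Proof.
move=> /mul_adj_unitary UU; apply: complexI.
by rewrite -!adj_mulmx_self adjM -mulmxA (mulmxA (adj U)) UU mul1mx.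
Qed.

Lemma vnorm_mulmx_contraction a (M : 'M[C]_a) x : opnorm_le M 1 -> vnorm (M *m x) <= vnorm x.
Proof. by move=> M1; rewrite -[leRHS]mul1r M1. Qed.

End Euclidean.

Section BlockEncoding.
Variable R : realType.
Local Notation C := R[i].

Lemma sum_mxtens (V : nmodType) a b (F : 'I_(a * b) -> V) :
  \sum_k F k = \sum_(i < a) \sum_(j < b) F (mxtens_index (i, j)).
Proof.
rewrite pair_bigA (reindex (@mxtens_index a b)) /=; first by apply: eq_bigr => -[].
by exists (@mxtens_unindex a b) => k _; [apply: mxtens_indexK | apply: mxtens_unindexK].
Qed.

(* x (x) |0>: the system in state x and the ancillas in |0> *)
Definition embed0 a b (x : 'cV[C]_a) : 'cV[C]_(a * b.+1) :=
  \col_k (if (mxtens_unindex k).2 == ord0 then x (mxtens_unindex k).1 0 else 0).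

Lemma sysblock_mulmx a b (U : 'M[C]_(a * b.+1)) (x : 'cV[C]_a) i :
  (sysblock U *m x) i 0 = (U *m embed0 b x) (mxtens_index (i, ord0)) 0.
Proof.
rewrite !mxE sum_mxtens; apply: eq_bigr => j _.
rewrite (bigD1 ord0) //= big1 ?addr0 => [|k /negbTE k0]; rewrite !mxE mxtens_indexK //=.
by rewrite k0 mulr0.
Qed.

Lemma sqnorm_embed0 a b (x : 'cV[C]_a) : sqnorm (embed0 b x) = sqnorm x.
Proof.
rewrite /sqnorm sum_mxtens; apply: eq_bigr => i _.
rewrite (bigD1 ord0) //= big1 ?addr0 => [|k /negbTE k0]; rewrite !mxE mxtens_indexK //=.
by rewrite k0 expr0n /= addr0.
Qed.

Lemma sysblock_contraction a b (U : 'M[C]_(a * b.+1)) : unitary U -> opnorm_le (sysblock U) 1.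
Proof.
move=> unitU x; rewrite mul1r ler_vnorm -(sqnorm_embed0 b x) -(sqnorm_unitary (embed0 b x) unitU).
rewrite [leRHS]/sqnorm sum_mxtens; apply: ler_sum => i _.
rewrite (bigD1 ord0) //= sysblock_mulmx lerDl.
by apply: sumr_ge0 => k _; rewrite addr_ge0 ?sqr_ge0.
Qed.

End BlockEncoding.

Section States.
Variable R : realType.
Local Notation C := R[i].

Lemma sqnorm_projector_le a (P : 'M[C]_a) x : projector P -> sqnorm (P *m x) <= sqnorm x.
Proof.
move=> [PP adjP]; rewrite -[x in leRHS](subrK (P *m x)) addrC sqnormD.
(* P x and (1 - P) x are orthogonal *)
have -> : dotr (P *m x) (x - P *m x) = 0.
  by rewrite dotrE adjM adjP mulmxBr mulmxA -(mulmxA _ P P) PP subrr mxE.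
by rewrite mulr0 addr0 lerDl sqnorm_ge0.
Qed.

Lemma vnorm_projector_le a (P : 'M[C]_a) x : projector P -> vnorm (P *m x) <= vnorm x.
Proof. by move=> projP; rewrite ler_vnorm sqnorm_projector_le. Qed.

Lemma mxtrace_projector_dm a (P : 'M[C]_a) x :
  projector P -> \tr (P *m dm x) = (sqnorm (P *m x))%:C%C.
Proof.
move=> [PP adjP]; rewrite /dm mulmxA mxtrace_mulC -adj_mulmx_self adjM adjP /mxtrace big_ord1.
by rewrite -!mulmxA (mulmxA P P) PP.
Qed.

Lemma tdist_dm_unit a (u w : 'cV[C]_a) :
  vnorm u = 1 -> vnorm w = 1 -> tdist_le (dm u) (dm w) (2 * vnorm (u - w)).
Proof.
(* tr (P (dm u - dm w)) = |P u|^2 - |P w|^2 = (|P u| - |P w|) (|P u| + |P w|) *)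
move=> u1 w1 P projP; rewrite mulmxBr linearB /= !mxtrace_projector_dm // -rmorphB lecR.
rewrite -!vnorm_sqr.
have := vnorm_projector_le u projP; have := vnorm_projector_le w projP.
have := vnorm_lerB_dist (P *m u) (P *m w).
rewrite -mulmxBr => /le_trans /(_ (vnorm_projector_le _ projP)) /ler_normlP[].
rewrite u1 w1.
have := vnorm_ge0 (P *m u); have := vnorm_ge0 (P *m w); nra.
Qed.

Lemma normalizeZ a (c : R) (y : 'cV[C]_a) : 0 < c -> normalize (c%:C%C *: y) = normalize y.
Proof.
move=> c0; rewrite /normalize vnormZ gtr0_norm // scalerA -rmorphM invfM.
by rewrite mulrAC mulVf ?mul1r ?gt_eqF.
Qed.

Lemma vnorm_normalize a (y : 'cV[C]_a) : y != 0 -> vnorm (normalize y) = 1.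
Proof.
rewrite -vnorm_gt0 => y0.
by rewrite /normalize vnormZ ger0_norm ?invr_ge0 ?vnorm_ge0 // mulVf ?gt_eqF.
Qed.

Lemma normalize_id a (y : 'cV[C]_a) : vnorm y = 1 -> normalize y = y.
Proof. by move=> y1; rewrite /normalize y1 invr1 scale1r. Qed.

Lemma vnorm_normalizeB a (v w : 'cV[C]_a) (e : R) : 0 < vnorm w -> 0 <= e -> e <= 1 / 8 ->
  vnorm (v - w) <= e * vnorm w -> vnorm (normalize v - normalize w) <= 3 * e.
Proof.
move=> w0 e0 e1 vw; have /ler_normlP[xy1 xy2] := le_trans (vnorm_lerB_dist v w) vw.
move: w0 vw xy1 xy2; set x := vnorm v; set y := vnorm w => w0 vw xy1 xy2.
have ey : e * y <= 1 / 8 * y by rewrite ler_wpM2r // ltW.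
have x0 : 0 < x by lra.
have -> : normalize v - normalize w = x^-1%:C%C *: (v - w) + ((y - x) / (x * y))%:C%C *: w.
  rewrite /normalize -/x -/y scalerBr -addrA; congr (_ + _).
  rewrite -!scaleNr -scalerDl -!rmorphN -rmorphD; congr (_%:C%C *: _).
  by field; rewrite !gt_eqF.
apply: le_trans (vnormD _ _) _.
rewrite !vnormZ -/y normrM !normfV (gtr0_norm x0) (gtr0_norm (mulr_gt0 x0 w0)).
have -> : x^-1 * vnorm (v - w) + `|y - x| / (x * y) * y = (vnorm (v - w) + `|y - x|) / x.
  by field; rewrite !gt_eqF.
rewrite ler_pdivrMr // distrC.
have := le_trans (vnorm_lerB_dist v w) vw; nra.
Qed.

End States.

Section Trajectory.
Variable R : realType.
Local Notation C := R[i].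

Fixpoint raw_state n (A : nat -> 'M[C]_n) (psi : 'cV[C]_n) (k : nat) : 'cV[C]_n :=
  if k is k'.+1 then A k' *m raw_state A psi k' else psi.

Variables (n : nat) (A : nat -> 'M[C]_n) (psi : 'cV[C]_n).
Hypothesis psi1 : vnorm psi = 1.

Lemma run_stateE k : run_state A psi k = normalize (raw_state A psi k).
Proof.
elim: k => [|k IHk] /=; first by rewrite normalize_id.
rewrite IHk; have [->|raw_neq0] := eqVneq (raw_state A psi k) 0.
  (* normalize 0 = 0, as 0^-1 = 0 *)
  by rewrite /normalize !(scaler0, mulmx0).
by rewrite [normalize (raw_state _ _ _)]/normalize -scalemxAr normalizeZ // invr_gt0 vnorm_gt0.
Qed.

Lemma reach_probE l : reach_prob A psi l = vnorm (raw_state A psi l) ^+ 2.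
Proof.
elim: l => [|l IHl]; first by rewrite /reach_prob big_ord0 psi1 expr1n.
rewrite /reach_prob big_ord_recr -/(reach_prob A psi l) IHl /succ_prob run_stateE /=.
have [->|raw_neq0] := eqVneq (raw_state A psi l) 0.
  by rewrite /normalize !(scaler0, mulmx0) vnorm0 expr0n mul0r.
rewrite /normalize -scalemxAr vnormZ ger0_norm ?invr_ge0 ?vnorm_ge0 //.
by rewrite exprMn mulrA -exprMn mulfV ?expr1n ?mul1r // gt_eqF ?vnorm_gt0.
Qed.

Variable r : nat.
Hypothesis A_contraction : forall j, (j < r)%N -> opnorm_le (A j) 1.

Lemma vnorm_raw_state_le l k : (l <= k <= r)%N ->
  vnorm (raw_state A psi k) <= vnorm (raw_state A psi l).
Proof.
elim: k => [|k IHk]; first by rewrite leqn0 => /andP[/eqP ->].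
case/andP; rewrite leq_eqVlt ltnS => /orP[/eqP -> // | lk kr].
apply: le_trans (vnorm_mulmx_contraction _ (A_contraction kr)) (IHk _).
by rewrite lk ltnW.
Qed.

Lemma vnorm_raw_stateB (W : nat -> 'M[C]_n) k : (k <= r)%N ->
  vnorm (raw_state A psi k - raw_state W psi k) <=
  \sum_(j < k) vnorm ((A j - W j) *m raw_state W psi j).
Proof.
elim: k => [|k IHk] kr /=; first by rewrite big_ord0 subrr vnorm0.
have -> : A k *m raw_state A psi k - W k *m raw_state W psi k =
    A k *m (raw_state A psi k - raw_state W psi k) + (A k - W k) *m raw_state W psi k.
  by rewrite mulmxBr mulmxBl addrA subrK.
rewrite big_ord_recr /=; apply: le_trans (vnormD _ _) (lerD _ (lexx _)).
exact: le_trans (vnorm_mulmx_contraction _ (A_contraction kr)) (IHk (ltnW kr)).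
Qed.

End Trajectory.

Section ImaginaryTimeEvolution.
Variables (R : realType) (n : nat) (V : 'M[R[i]]_n.+1) (d : 'I_n.+1 -> R).
Hypothesis unitV : unitary V.

Lemma FbD a b : Fb V d a *m Fb V d b = Fb V d (a + b).
Proof.
rewrite /Fb !mulmxA -(mulmxA _ (adj V) V) (mul_adj_unitary unitV) mulmx1.
rewrite -(mulmxA V) mulmx_diag; congr (_ *m _ *m _); congr diag_mx.
by apply/rowP => i; rewrite !mxE -rmorphM -expRD opprD mulrDl.
Qed.

Lemma Fb0 : Fb V d 0 = 1%:M.
Proof.
rewrite /Fb (_ : \row_i _ = const_mx 1) ?diag_const_mx ?mulmx1 //.
by apply/rowP => i; rewrite !mxE oppr0 mul0r expR0.
Qed.

Lemma vnorm_Fb_gt0 b (x : 'cV[R[i]]_n.+1) : x != 0 -> 0 < vnorm (Fb V d b *m x).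
Proof.
rewrite !vnorm_gt0; apply: contraNN => /eqP Fbx0.
by rewrite -[x]mul1mx -Fb0 -(subrr b) addrC -FbD -mulmxA Fbx0 mulmx0.
Qed.

Lemma raw_state_Fb (alpha dbeta : nat -> R) psi k :
  raw_state (fun j => (alpha j)%:C%C *: Fb V d (dbeta j)) psi k =
  (\prod_(j < k) alpha j)%:C%C *: (Fb V d (\sum_(j < k) dbeta j) *m psi).
Proof.
elim: k => [|k IHk] /=; first by rewrite !big_ord0 Fb0 mul1mx scale1r.
rewrite IHk -scalemxAl -scalemxAr scalerA mulmxA FbD.
congr (_ *: (Fb V d _ *m psi)); rewrite big_ord_recr /=; first by rewrite mulrC rmorphM.
by rewrite addrC.
Qed.

End ImaginaryTimeEvolution.

Section Estimates.
Variable R : realType.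

Lemma sum_expr2_le k : \sum_(j < k) (2 : R) ^+ j <= 2 ^+ k.
Proof.
elim: k => [|k IHk]; first by rewrite big_ord0 expr0.
by rewrite big_ord_recr /= exprS; lra.
Qed.

Lemma sum_expr2_div_le1 k r : (k <= r)%N -> \sum_(j < k) (2 ^+ j / 2 ^+ r : R) <= 1.
Proof.
move=> kr; rewrite -mulr_suml ler_pdivrMr ?exprn_gt0 // mul1r.
by apply: le_trans (sum_expr2_le k) _; rewrite ler_eXn2l // ltr1n.
Qed.

Lemma expr4E k : (4 : R) ^+ k = 2 ^+ k * 2 ^+ k.
Proof. by rewrite -exprMn; congr (_ ^+ _); lra. Qed.

Lemma invr_2expr4_le r : (0 < r)%N -> (2 * 4 ^+ (r - 1))^-1 <= (2 ^+ r)^-1 :> R.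
Proof.
case: r => // r _; rewrite subn1 /= lef_pV2 ?posrE ?mulr_gt0 ?exprn_gt0 //.
rewrite exprS expr4E ler_pM2l ?exprn_gt0 // ler_peMl ?exprn_ge0 //.
by rewrite exprn_ege1 // ler1n.
Qed.

Lemma invr_expr4_le j r : (j <= r)%N -> (4 ^+ (r - j))^-1 <= 2 ^+ j / 2 ^+ r :> R.
Proof.
move=> jr; rewrite -(subnKC jr) exprD invfM mulrA mulfV ?mul1r ?expf_neq0 ?pnatr_eq0 //.
rewrite addKn expr4E lef_pV2 ?posrE ?mulr_gt0 ?exprn_gt0 // ler_peMl ?exprn_ge0 //.
by rewrite exprn_ege1 // ler1n.
Qed.

Lemma ler_dist_sqr_ratio (x y X a e : R) : 0 < a -> 0 < y -> 0 <= e -> e <= 1 / 8 ->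
  `|x - y| <= e * a -> `|X - a| <= e * a -> X <= x ->
  `|x ^+ 2 / X ^+ 2 - y ^+ 2 / a ^+ 2| <= 16 * e * (y ^+ 2 / a ^+ 2).
Proof.
move=> a0 y0 e0 e1 xy Xa Xx.
have /ler_normlP[xy1 xy2] := xy; have /ler_normlP[Xa1 Xa2] := Xa.
have ea : e * a <= a / 8 by nra.
have X0 : 0 < X by lra.
have ya : 3 / 4 * a <= y by lra.
have -> : x ^+ 2 / X ^+ 2 - y ^+ 2 / a ^+ 2 =
    (x * a - y * X) * (x * a + y * X) / (X ^+ 2 * a ^+ 2).
  by field; rewrite !gt_eqF.
have sum_ge0 : 0 <= x * a + y * X by nra.
rewrite normrM normfV normrM (ger0_norm sum_ge0).
rewrite (ger0_norm (mulr_ge0 (sqr_ge0 X) (sqr_ge0 a))).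
rewrite ler_pdivrMr ?mulr_gt0 ?exprn_gt0 //.
have -> : 16 * e * (y ^+ 2 / a ^+ 2) * (X ^+ 2 * a ^+ 2) = 16 * e * y ^+ 2 * X ^+ 2.
  by field; rewrite gt_eqF.
have dif_le : `|x * a - y * X| <= 7 / 3 * e * a * y.
  rewrite (_ : x * a - y * X = (x - y) * a - y * (X - a)); last by ring.
  apply: le_trans (ler_normB _ _) _; rewrite !normrM (gtr0_norm a0) (gtr0_norm y0).
  have := ler_wpM2r (ltW a0) xy; have := ler_wpM2l (ltW y0) Xa; nra.
have sum_le : x * a + y * X <= 3 * y * a by nra.
apply: le_trans (_ : 7 / 3 * e * a * y * (3 * y * a) <= _).
  exact: ler_pM (normr_ge0 _) sum_ge0 dif_le sum_le.
have : 7 * a ^+ 2 <= 16 * X ^+ 2 by nra.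
have : 0 <= e * y ^+ 2 by rewrite mulr_ge0 ?sqr_ge0.
nra.
Qed.

Lemma ler_dist_weighted_sum r (N nl w : nat -> R) (c : R) :
  (forall l, (l < r)%N -> 0 <= w l) -> (forall l, (l < r)%N -> `|N l - nl l| <= c * nl l) ->
  `|\sum_(l < r) N l * w l - \sum_(l < r) nl l * w l| <= c * \sum_(l < r) nl l * w l.
Proof.
move=> w0 Nnl; rewrite -sumrB mulr_sumr; apply: le_trans (ler_norm_sum _ _ _) (ler_sum _ _).
move=> l _; rewrite -mulrBl normrM (ger0_norm (w0 l (ltn_ord l))) mulrA.
by rewrite ler_wpM2r ?w0 ?Nnl.
Qed.

Lemma normr_1B_lt1 (S : R) : 0 < S <= 1 -> `|1 - S| < 1.
Proof. by case/andP=> S0 S1; rewrite ger0_norm ?subr_ge0 //; lra. Qed.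

Lemma cvg_expr_restart (S : R) : 0 < S <= 1 -> (fun t : nat => (1 - S) ^+ t) @ \oo --> 0.
Proof.
move=> /normr_1B_lt1 S1.
have -> : (fun t : nat => (1 - S) ^+ t) = geometric 1 (1 - S).
  by apply/funext => t; rewrite /= mul1r.
exact: cvg_geometric.
Qed.

Lemma cvg_series_restart (S p : R) : 0 < S <= 1 ->
  series (fun t : nat => (1 - S) ^+ t * p) @ \oo --> p / S.
Proof.
move=> /normr_1B_lt1 S1.
have -> : (fun t : nat => (1 - S) ^+ t * p) = geometric p (1 - S).
  by apply/funext => t; rewrite /= mulrC.
by have := cvg_geometric_series (a := p) S1; rewrite subKr.
Qed.

End Estimates.

Section FragmentedQITE.
Variables (R : realType) (n : nat) (V : 'M[R[i]]_n.+1) (d : 'I_n.+1 -> R).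
Variables (psi : 'cV[R[i]]_n.+1) (eps : R) (r : nat) (dbeta alpha eps' : nat -> R).
Variable A : nat -> 'M[R[i]]_n.+1.

Local Notation beta_ k := (\sum_(j < k) dbeta j).
Local Notation p := (pPsi V d psi).

Hypotheses (unitV : unitary V) (psi1 : vnorm psi = 1).
Hypotheses (eps_ge0 : 0 <= eps) (eps_small : eps <= 1 / 8).
Hypothesis alpha_gt0 : forall l, (l < r)%N -> 0 < alpha l.
Hypothesis A_contraction : forall l, (l < r)%N -> opnorm_le (A l) 1.
Hypothesis A_close : forall l, (l < r)%N ->
  opnorm_le ((alpha l)%:C%C *: Fb V d (dbeta l) - A l) (eps' l).
Hypothesis eps'_le : forall l, (l < r)%N ->
  eps' l <= (if l == 0%N then
               eps * \prod_(k < r) alpha k / (2 * 4 ^+ (r - 1)) * Num.sqrt (p (beta_ r))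
             else
               eps * \prod_(l <= k < r) alpha k / 4 ^+ (r - l)
                 * Num.sqrt (p (beta_ r) / p (beta_ l))).

Let W l := (alpha l)%:C%C *: Fb V d (dbeta l).
Let normF k := vnorm (Fb V d (beta_ k) *m psi).
Let norm_ideal := vnorm (raw_state W psi r).
Let norm_actual := vnorm (raw_state A psi r).

Lemma pPsi_beta k : p (beta_ k) = normF k ^+ 2.
Proof. by []. Qed.

Lemma normF_gt0 k : 0 < normF k.
Proof. by apply: vnorm_Fb_gt0; rewrite // -vnorm_gt0 psi1. Qed.

Lemma prod_alpha_gt0 i k : (k <= r)%N -> 0 < \prod_(i <= j < k) alpha j.
Proof.
by move=> kr; rewrite big_nat; apply: prodr_gt0 => j /andP[_ jk]; apply/alpha_gt0/(leq_trans jk).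
Qed.

Lemma vnorm_ideal k : (k <= r)%N ->
  vnorm (raw_state W psi k) = \prod_(j < k) alpha j * normF k.
Proof.
move=> kr; rewrite raw_state_Fb // vnormZ gtr0_norm // -(big_mkord xpredT).
exact: prod_alpha_gt0.
Qed.

Lemma vnorm_ideal_gt0 k : (k <= r)%N -> 0 < vnorm (raw_state W psi k).
Proof.
move=> kr; rewrite vnorm_ideal // mulr_gt0 ?normF_gt0 //.
by rewrite -(big_mkord xpredT) prod_alpha_gt0.
Qed.

Lemma norm_ideal_gt0 : 0 < norm_ideal.
Proof. exact: vnorm_ideal_gt0. Qed.

Lemma step_error l : (l < r)%N ->
  vnorm ((A l - W l) *m raw_state W psi l) <= eps * norm_ideal * (2 ^+ l / 2 ^+ r).
Proof.
move=> lr; set x := raw_state _ psi l.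
have close : vnorm ((A l - W l) *m x) <= eps' l * vnorm x.
  by rewrite -vnormN -mulNmx opprB; exact: A_close.
apply: le_trans close _; rewrite /norm_ideal vnorm_ideal //.
have epsPf_ge0 : 0 <= eps * (\prod_(j < r) alpha j * normF r).
  by rewrite mulr_ge0 // mulr_ge0 ?ltW ?normF_gt0 // -(big_mkord xpredT) prod_alpha_gt0.
have sqrt_p k : Num.sqrt (p (beta_ k)) = normF k.
  by rewrite pPsi_beta sqrtr_sqr gtr0_norm ?normF_gt0.
have [l0 | l_neq0] := eqVneq l 0%N.
  have -> : vnorm x = 1 by rewrite /x l0.
  move: (eps'_le lr); rewrite l0 eqxx sqrt_p mulr1 expr0 mul1r => /le_trans; apply.
  rewrite (mulrAC _ _ (normF r)) -[eps * _ * normF r]mulrA; apply: (ler_wpM2l epsPf_ge0).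
  exact: invr_2expr4_le (leq_ltn_trans (leq0n l) lr).
move: (eps'_le lr); rewrite (negbTE l_neq0) !pPsi_beta -expr_div_n sqrtr_sqr.
rewrite ger0_norm ?divr_ge0 ?(ltW (normF_gt0 _)) // => /(ler_wpM2r (vnorm_ge0 x)) /le_trans.
apply.
have split_r : \prod_(j < r) alpha j = \prod_(j < l) alpha j * \prod_(l <= j < r) alpha j.
  by rewrite -!(big_mkord xpredT) -big_cat_nat ?(ltnW lr).
rewrite /x vnorm_ideal ?(ltnW lr) // split_r; rewrite split_r in epsPf_ge0.
have fl_neq0 := gt_eqF (normF_gt0 l).
move: (normF l) (normF r) fl_neq0 epsPf_ge0 => fl fr fl_neq0 epsPf_ge0.
set Pl := \prod_(j < l) _; set Q := \prod_(l <= j < r) _.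
have -> : eps * Q / 4 ^+ (r - l) * (fr / fl) * (Pl * fl) = eps * (Pl * Q * fr) * (4 ^+ (r - l))^-1.
  by field; rewrite fl_neq0 expf_neq0 ?pnatr_eq0.
exact: (ler_wpM2l epsPf_ge0) (invr_expr4_le _ (ltnW lr)).
Qed.

Lemma raw_state_error k : (k <= r)%N ->
  vnorm (raw_state A psi k - raw_state W psi k) <= eps * norm_ideal.
Proof.
move=> kr; apply: le_trans (vnorm_raw_stateB psi A_contraction _ kr) _.
apply: le_trans (ler_sum _ (fun j _ => step_error (leq_trans (ltn_ord j) kr))) _.
rewrite -mulr_sumr -[leRHS]mulr1; apply: ler_wpM2l (sum_expr2_div_le1 _ kr).
by rewrite mulr_ge0 ?(ltW norm_ideal_gt0).
Qed.

Lemma norm_actual_close : `|norm_actual - norm_ideal| <= eps * norm_ideal.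
Proof. exact: le_trans (vnorm_lerB_dist _ _) (raw_state_error (leqnn r)). Qed.

Lemma norm_actual_gt0 : 0 < norm_actual.
Proof.
have /ler_normlP[Xa _] := norm_actual_close; have := norm_ideal_gt0.
have : eps * norm_ideal <= 1 / 8 * norm_ideal by rewrite ler_wpM2r ?(ltW norm_ideal_gt0).
lra.
Qed.

Lemma success_prob_bounds : 0 < reach_prob A psi r <= 1.
Proof.
have X0 := norm_actual_gt0.
rewrite reach_probE // -/norm_actual exprn_gt0 //= expr_le1 ?(ltW X0) //.
by rewrite -psi1; apply: (vnorm_raw_state_le psi A_contraction (l := 0)); rewrite leqnn.
Qed.

Lemma termination : (fun t : nat => (1 - reach_prob A psi r) ^+ t) @ \oo --> 0.
Proof. exact: cvg_expr_restart success_prob_bounds. Qed.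

Lemma output_close :
  tdist_le (dm (run_state A psi r)) (dm (normalize (Fb V d (beta_ r) *m psi))) (16 * eps).
Proof.
have -> : normalize (Fb V d (beta_ r) *m psi) = normalize (raw_state W psi r).
  by rewrite raw_state_Fb // normalizeZ // -(big_mkord xpredT) prod_alpha_gt0.
rewrite run_stateE //.
have raw_neq0 : raw_state A psi r != 0 by rewrite -vnorm_gt0 norm_actual_gt0.
have ideal_neq0 : raw_state W psi r != 0 by rewrite -vnorm_gt0 norm_ideal_gt0.
move=> P projP.
apply: le_trans (tdist_dm_unit (vnorm_normalize raw_neq0) (vnorm_normalize ideal_neq0) projP) _.
have := vnorm_normalizeB norm_ideal_gt0 eps_ge0 eps_small (raw_state_error (leqnn r)).
rewrite lecR => /(ler_wpM2l (ler0n R 2)) /le_trans; apply.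
by rewrite mulrA ler_wpM2r //; lra.
Qed.

Let nl l := p (beta_ l) / (p (beta_ r) * \prod_(l <= k < r) alpha k ^+ 2).

Lemma nlE l : (l <= r)%N -> nl l = vnorm (raw_state W psi l) ^+ 2 / norm_ideal ^+ 2.
Proof.
move=> lr; rewrite /nl /norm_ideal !vnorm_ideal // prodrXl !pPsi_beta.
rewrite -!(big_mkord xpredT) (big_cat_nat (leq0n l) lr) /=.
have := prod_alpha_gt0 0 lr; have := prod_alpha_gt0 l (leqnn r).
have := normF_gt0 l; have := normF_gt0 r.
move: (\prod_(0 <= i < l) _) (\prod_(l <= i < r) _) (normF l) (normF r) => P Q fl fr.
by move=> fr0 fl0 Q0 P0; field; rewrite !gt_eqF.
Qed.

Lemma average_runs l : (l < r)%N ->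
  series (fun t : nat => (1 - reach_prob A psi r) ^+ t * reach_prob A psi l) @ \oo
    --> reach_prob A psi l / reach_prob A psi r /\
  `|reach_prob A psi l / reach_prob A psi r - nl l| <= 16 * eps * nl l.
Proof.
move=> lr; split; first exact: cvg_series_restart success_prob_bounds.
rewrite !reach_probE // nlE ?(ltnW lr) //.
apply: ler_dist_sqr_ratio norm_ideal_gt0 (vnorm_ideal_gt0 (ltnW lr)) eps_ge0 eps_small _
  norm_actual_close _.
- exact: le_trans (vnorm_lerB_dist _ _) (raw_state_error (ltnW lr)).
- by apply: (vnorm_raw_state_le psi A_contraction); rewrite (ltnW lr) leqnn.
Qed.

End FragmentedQITE.

Theorem theorem4 (R : realType) :
  exists Cst e0 : R, 0 < Cst /\ 0 < e0 /\
  forall (n : nat) (V : 'M[R[i]]_n.+1) (d : 'I_n.+1 -> R) (psi : 'cV[R[i]]_n.+1)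
    (beta eps : R) (r : nat) (dbeta : nat -> R)
    (m : nat -> nat) (U : forall l : nat, 'M[R[i]]_(n.+1 * (m l).+1))
    (eps' alpha : nat -> R) (q : nat -> nat),
  unitary V -> opnorm_le (ham V d) 1 ->
  vnorm psi = 1 ->
  0 <= beta -> 0 <= eps -> eps <= e0 ->
  (forall l, (l < r)%N -> 0 < dbeta l) ->
  \sum_(l < r) dbeta l = beta ->
  (forall l, (l < r)%N -> 0 < alpha l) ->
  (forall l, (l < r)%N -> block_encoding (U l) (Fb V d (dbeta l)) (eps' l) (alpha l)) ->
  (forall l, (l < r)%N ->
     eps' l <= (if l == 0%N then
                  eps * \prod_(k < r) alpha k / (2 * 4 ^+ (r - 1))
                    * Num.sqrt (pPsi V d psi beta)
                else
                  eps * \prod_(l <= k < r) alpha k / 4 ^+ (r - l)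
                    * Num.sqrt (pPsi V d psi beta / pPsi V d psi (\sum_(k < l) dbeta k)))) ->
  let A := fun l => sysblock (U l) in
  let S := reach_prob A psi r in
  let nl := fun l => pPsi V d psi (\sum_(k < l) dbeta k)
                     / (pPsi V d psi beta * \prod_(l <= k < r) alpha k ^+ 2) in
  (* the algorithm terminates with probability one *)
  ((fun t : nat => (1 - S) ^+ t) @ \oo --> 0) /\
  (* output state is F_beta(H)|Psi> normalized, up to trace distance O(eps) *)
  tdist_le (dm (run_state A psi r)) (dm (normalize (Fb V d beta *m psi))) (Cst * eps) /\
  (* average number of runs N l of P_l, and average query complexity *)
  exists N : nat -> R,
    (forall l, (l < r)%N ->
       series (fun t : nat => (1 - S) ^+ t * reach_prob A psi l) @ \oo --> N l /\
       `|N l - nl l| <= Cst * eps * nl l) /\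
    `|\sum_(l < r) N l * (q l)%:R - \sum_(l < r) nl l * (q l)%:R|
      <= Cst * eps * \sum_(l < r) nl l * (q l)%:R.
Proof.
exists 16, (1 / 8); split; first lra; split; first lra.
move=> n V d psi beta eps r dbeta m U eps' alpha q unitV _ psi1 _ eps_ge0 eps_small _ <-.
move=> alpha_gt0 encU eps'_le A S nl.
have A_contraction l (lr : (l < r)%N) : opnorm_le (A l) 1.
  exact: sysblock_contraction (encU l lr).1.
have A_close l (lr : (l < r)%N) : opnorm_le ((alpha l)%:C%C *: Fb V d (dbeta l) - A l) (eps' l).
  exact: (encU l lr).2.
have runs :=
  average_runs unitV psi1 eps_ge0 eps_small alpha_gt0 A_contraction A_close eps'_le.
split.
  exact: termination unitV psi1 eps_ge0 eps_small alpha_gt0 A_contraction A_close eps'_le.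
split.
  exact: output_close unitV psi1 eps_ge0 eps_small alpha_gt0 A_contraction A_close eps'_le.
exists (fun l => reach_prob A psi l / S); split; first exact: runs.
exact: ler_dist_weighted_sum (fun l _ => ler0n R (q l)) (fun l lr => (runs l lr).2).
Qed.
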